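(* Let $\mathbf{s}=(s_1,\dots,s_k)$ be a switch pattern, $l\in\{1,\dots,k\}$, and $\alpha,\beta\ge0$ with $\alpha+\beta\le n$. Then $$g^{(l)}_{\alpha,\beta,\mathbf{s}}=f_{\alpha,\beta,\mathbf{s}_l}\,p_{\alpha,\beta}(\mathbf{s},l),\qquad p_{\alpha,\beta}(\mathbf{s},l)=\frac{(n-s_l)_\alpha(s_l)_\beta}{(n)_{\alpha+\beta}},$$ where $f_{\alpha,\beta,\mathbf{s}_l}=\frac{1}{2^b}\sum_{j=0}^b\binom bj a_{\alpha,\beta}(j)\lambda_{n,j,\mathbf{s}_l}$ with $b=\alpha+\beta$, $a_{\alpha,0}\equiv1$ and $a_{\alpha,\beta}(j)=\frac{b-j}{b}a_{\alpha,\beta-1}(j)-\frac jba_{\alpha,\beta-1}(j-1)$ for $\beta\ge1$. For $0\le\alpha+\beta\le4$ these sequences are: $a_{0,0}(j)=1$; $a_{0,1}(j)=(-1)^j$, $a_{1,0}(j)=1$; $a_{0,2}(j)=(-1)^j$, $a_{1,1}(j)=1-j$, $a_{2,0}(j)=1$; $a_{0,3}(j)=(-1)^j$, $a_{1,2}(j)=(-1)^j(1-2j/3)$, $a_{2,1}(j)=1-2j/3$, $a_{3,0}(j)=1$; $a_{0,4}(j)=(-1)^j$, $a_{1,3}(j)=(-1)^j(1-j/2)$, $a_{2,2}(j)=1-j(4-j)/3$, $a_{3,1}(j)=1-j/2$, $a_{4,0}(j)=1$.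
   Context: Lightbulb process on $n$ bulbs with $k$ stages and switch pattern $\mathbf{s}$: all bulbs initially off unless stated; at stage $r$ a uniformly random subset of exactly $s_r$ bulbs is toggled, independently across stages; $X_{rj}=1$ iff bulb $j$ is toggled at stage $r$ ($X_{0j}$ denotes the deterministic initial status), and $X_j=(\sum_{r=0}^kX_{rj})\bmod 2$ indicates bulb $j$ is on at the end. Define, for all bulbs initially off, $g^{(l)}_{\alpha,\beta,\mathbf{s}}=P(X_1=\dots=X_{\alpha+\beta}=0,\ X_{l1}=\dots=X_{l\alpha}=0,\ X_{l,\alpha+1}=\dots=X_{l,\alpha+\beta}=1)$. For a pattern $\mathbf{t}$, $f_{\alpha,\beta,\mathbf{t}}=P(X_i=0,\ i=1,\dots,\alpha+\beta\mid X_{0i}=0,\ i\le\alpha;\ X_{0i}=1,\ \alpha<i\le\alpha+\beta)$ for the process with pattern $\mathbf{t}$. $\mathbf{s}_l=(s_1,\dots,s_{l-1},s_{l+1},\dots,s_k)$. $(n)_t=n(n-1)\cdots(n-t+1)$, $\lambda_{n,j,s}=\sum_{t=0}^j\binom jt(-2)^t\frac{(s)_t}{(n)_t}$, $\lambda_{n,j,\mathbf{t}}=\prod_r\lambda_{n,j,t_r}$. *)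

From HB Require Import structures.
From mathcomp Require Import all_boot all_order all_algebra.
Set Implicit Arguments. Unset Strict Implicit. Unset Printing Implicit Defensive.
Import Order.TTheory GRing.Theory Num.Theory.
Local Open Scope ring_scope.

Section Lightbulb.
Variable R : realFieldType.
Variable n : nat.
Variable I : finType.

(* An outcome: for each stage r, the set of bulbs toggled at stage r. *)
Definition outcome := {ffun I -> {set 'I_n}}.

(* Outcomes compatible with switch pattern s (exactly s r bulbs at stage r);
   each is equally likely (independent uniform subsets). *)
Definition valid (s : I -> nat) : {set outcome} :=
  [set w : outcome | [forall r, #|w r| == s r]].

Definition prob (s : I -> nat) (E : pred outcome) : R :=
  (#|[set w in valid s | E w]|)%:R / (#|valid s|)%:R.

Definition final (x0 : 'I_n -> bool) (w : outcome) (j : 'I_n) : bool :=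
  x0 j (+) odd #|[set r : I | j \in w r]|.
End Lightbulb.

(* g^{(l)}_{alpha,beta,s}: all bulbs initially off; bulbs 1..alpha+beta
   (indices 0..alpha+beta-1) end off, bulbs 1..alpha not toggled at stage l,
   bulbs alpha+1..alpha+beta toggled at stage l. *)
Definition g_prob (R : realFieldType) (n k : nat) (s : 'I_k -> nat) (l : 'I_k)
  (alpha beta : nat) : R :=
  prob R s (fun w : outcome n 'I_k =>
    [forall j : 'I_n, (j < alpha + beta)%N ==>
        ~~ final (fun _ => false) w j && ((j \in w l) == (alpha <= j)%N)]).

(* f_{alpha,beta,t}: bulbs 1..alpha initially off, alpha+1..alpha+beta
   initially on (others off); probability that bulbs 1..alpha+beta all end off. *)
Definition f_prob (R : realFieldType) (n : nat) (I : finType) (t : I -> nat)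
  (alpha beta : nat) : R :=
  prob R t (fun w : outcome n I =>
    [forall j : 'I_n, (j < alpha + beta)%N ==>
        ~~ final (fun j : 'I_n => (alpha <= j)%N && (j < alpha + beta)%N) w j]).

Definition drop_stage (k : nat) (s : 'I_k -> nat) (l : 'I_k) : 'I_k.-1 -> nat :=
  fun i => s (lift l i).

Definition lam (R : realFieldType) (n j s : nat) : R :=
  \sum_(t < j.+1) ('C(j, t))%:R * (-2) ^+ t * ((s ^_ t)%:R / (n ^_ t)%:R).

Definition lamP (R : realFieldType) (n j : nat) (I : finType) (t : I -> nat) : R :=
  \prod_(r : I) lam R n j (t r).

Fixpoint acoef (R : realFieldType) (alpha beta j : nat) : R :=
  match beta with
  | 0 => 1
  | beta'.+1 =>
      let b := (alpha + beta'.+1)%N in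
      ((b%:R - j%:R) / b%:R) * acoef R alpha beta' j
      - (j%:R / b%:R) * acoef R alpha beta' j.-1
  end.

Definition p_coef (R : realFieldType) (n k : nat) (s : 'I_k -> nat) (l : 'I_k)
  (alpha beta : nat) : R :=
  ((n - s l) ^_ alpha)%:R * ((s l) ^_ beta)%:R / (n ^_ (alpha + beta))%:R.

Definition f_formula (R : realFieldType) (n : nat) (I : finType) (t : I -> nat)
  (alpha beta : nat) : R :=
  let b := (alpha + beta)%N in
  (2 ^+ b)^-1 * \sum_(j < b.+1) ('C(b, j))%:R * acoef R alpha beta j * lamP R n j t.

From HB Require Import structures.
From mathcomp Require Import all_boot all_order all_algebra.
From mathcomp Require Import ring.
Set Implicit Arguments. Unset Strict Implicit. Unset Printing Implicit Defensive.
Import Order.TTheory GRing.Theory Num.Theory.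
Local Open Scope ring_scope.

(* The indicator that the bulbs of P all end off is 2^-|P| times the sum over S \subset P of
   prod_(i in S) (-1)^(X_i), and (-1)^(X_i) is (-1)^(X_0i) times a product over the
   stages.  The stages are independent, so the expectation of such a product factors,
   and for a uniform s-subset A of the n bulbs, expanding prod_(i in S) (1 - 2[i in A])
   over the subsets of S gives E[(-1)^|S :&: A|] = lambda_{n,|S|,s}.  Grouping the S by
   cardinality, the signed count of the S with |S| = j is the j-th coefficient of
   (1 + X)^alpha (1 - X)^beta, i.e. C(alpha+beta, j) a_{alpha,beta}(j).
   For g, the set toggled at stage l splits off: it must meet the first alpha+beta
   bulbs exactly in the last beta of them, which makes those bulbs "initially on" for
   the remaining stages; counting such sets gives the factor p_{alpha,beta}(s,l). *)

Lemma ffactD n a b : (n ^_ (a + b) = n ^_ a * (n - a) ^_ b)%N.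
Proof.
elim: b => [|b IHb]; first by rewrite addn0 muln1.
by rewrite addnS !ffactnSr IHb subnDA mulnA.
Qed.

Lemma bin_ffact_sub n p q s : (q <= s)%N -> (q <= p)%N ->
  ('C(n - p, s - q) * n ^_ p = 'C(n, s) * s ^_ q * (n - s) ^_ (p - q))%N.
Proof.
move=> le_qs le_qp; apply/eqP; rewrite -(eqn_pmul2r (fact_gt0 (s - q))).
rewrite mulnAC bin_ffact mulnC -ffactD mulnAC -(mulnA 'C(n, s)) ffact_fact //.
by rewrite bin_ffact -ffactD addnBA // addnC addnBA.
Qed.

Section FinsetSums.
Variable T : finType.

Lemma prod1D_subset (R : comNzRingType) (P : {set T}) (x : T -> R) :
  \prod_(i in P) (1 + x i) = \sum_(S : {set T} | S \subset P) \prod_(i in S) x i.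
Proof.
pose y i := if i \in P then x i else 0.
rewrite big_mkcond (eq_bigr (fun i => y i + 1)) => [|i _]; last first.
  by rewrite /y; case: (i \in P); rewrite ?add0r // addrC.
rewrite bigA_distr [RHS]big_mkcond; apply: eq_bigr => S _.
rewrite -big_mkcond /=; case: (boolP (S \subset P)) => [/subsetP SP|].
  by apply: eq_bigr => i /SP; rewrite /y => ->.
by case/subsetPn=> i iS iP; rewrite (bigD1 i) //= /y (negbTE iP) mul0r.
Qed.

Lemma sum_subset_by_card (R : comNzRingType) (P : {set T}) (c : {set T} -> R) (L : nat -> R) :
  \sum_(S : {set T} | S \subset P) c S * L #|S|
  = \sum_(j < #|P|.+1) (\sum_(S : {set T} | (S \subset P) && (#|S| == j)) c S) * L j.
Proof.
rewrite (partition_big (fun S : {set T} => inord #|S| : 'I_#|P|.+1) xpredT) //=.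
apply: eq_bigr => j _; rewrite mulr_suml.
apply: eq_big => [S|S /andP[SP /eqP <-]]; last by rewrite inordK // ltnS subset_leq_card.
case SP: (S \subset P) => //=.
by rewrite -val_eqE /= inordK // ltnS subset_leq_card.
Qed.

Lemma sum_subset_card (R : comNzRingType) (P : {set T}) (L : nat -> R) :
  \sum_(S : {set T} | S \subset P) L #|S| = \sum_(j < #|P|.+1) 'C(#|P|, j)%:R * L j.
Proof.
under eq_bigr do rewrite -[L _]mul1r.
rewrite sum_subset_by_card; apply: eq_bigr => j _.
by rewrite sumr_const -cards_draws -mulr_natl mulr1 cardsE.
Qed.

Lemma coef_prod_1DCX (R : comNzRingType) (P : {set T}) (e : T -> R) j :
  (\prod_(i in P) (1 + (e i)%:P * 'X))`_j
  = \sum_(S : {set T} | (S \subset P) && (#|S| == j)) \prod_(i in S) e i.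
Proof.
rewrite prod1D_subset coef_sum big_mkcondr /=; apply: eq_bigr => S _.
rewrite big_split /= prodr_const -rmorph_prod coefCM coefXn eq_sym.
by case: (_ == _); rewrite ?mulr1 ?mulr0.
Qed.

Lemma card_draws_meet (P Q : {set T}) s : Q \subset P ->
  #|[set A : {set T} | (#|A| == s) && (A :&: P == Q)]|
  = if (#|Q| <= s)%N then 'C(#|T| - #|P|, s - #|Q|) else 0%N.
Proof.
move=> sQP; case: leqP => [le_Qs|lt_sQ]; last first.
  apply: eq_card0 => A; rewrite !inE; apply/negP => /andP[/eqP sA /eqP AP].
  by move: lt_sQ; rewrite -sA -AP ltnNge subset_leq_card ?subsetIl.
have offP (B : {set T}) : B \subset ~: P -> [disjoint B & P].
  by rewrite disjoints_subset.
have QBP (B : {set T}) : B \subset ~: P -> (Q :|: B) :\: P = B.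
  move=> sBP; have /eqP QP0 : Q :\: P == set0 by rewrite setD_eq0.
  by rewrite setDUl QP0 set0U setDE (setIidPl sBP).
(* [B |-> Q :|: B] maps the (s - #|Q|)-subsets of [~: P] onto the sets counted. *)
have -> : (#|T| - #|P| = #|~: P|)%N by rewrite -(cardsC P) addKn.
rewrite -cards_draws -[in RHS](@card_in_imset _ _ (setU Q)); last first.
  move=> B1 B2; rewrite !inE => /andP[sB1 _] /andP[sB2 _] eqQB.
  by rewrite -(QBP _ sB1) -(QBP _ sB2) eqQB.
apply: eq_card => A; rewrite inE; apply/andP/imsetP => [[/eqP sA /eqP AP]|[B]].
  exists (A :\: P); last by rewrite -{1}AP setID.
  by rewrite inE {1}setDE subsetIr cardsD AP sA /=.
rewrite inE => /andP[sBP /eqP cB] ->.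
have dQB : [disjoint Q & B] by rewrite disjoint_sym (disjointWr sQP) ?offP.
rewrite cardsU (disjoint_setI0 dQB) cards0 subn0 cB subnKC // setIUl.
by rewrite (setIidPl sQP) (disjoint_setI0 (offP _ sBP)) setU0 !eqxx.
Qed.

Lemma card_draws_meet_ffact (P Q : {set T}) s : Q \subset P ->
  (#|[set A : {set T} | (#|A| == s) && (A :&: P == Q)]| * #|T| ^_ #|P|
   = 'C(#|T|, s) * s ^_ #|Q| * (#|T| - s) ^_ (#|P| - #|Q|))%N.
Proof.
move=> sQP; rewrite card_draws_meet //; case: leqP => [le_Qs|lt_sQ].
  by rewrite bin_ffact_sub // subset_leq_card.
by rewrite (ffact_small lt_sQ) muln0 mul0n.
Qed.

Lemma sum_indicator_card (R : comNzRingType) (P Q : pred T) :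
  \sum_(x | P x) (Q x : nat)%:R = #|[set x | P x && Q x]|%:R :> R.
Proof.
rewrite (eq_bigr (fun x => if Q x then 1 else 0)) => [|x _]; last by case: (Q x).
by rewrite -big_mkcondr sumr_const cardsE.
Qed.

End FinsetSums.

Lemma sum_draws_sign (R : realFieldType) n (S : {set 'I_n}) s :
  \sum_(A : {set 'I_n} | #|A| == s) \prod_(i in S) (-1) ^+ (i \in A)
  = 'C(n, s)%:R * lam R n #|S| s :> R.
Proof.
have signE (A : {set 'I_n}) : \prod_(i in S) (-1) ^+ (i \in A)
    = \sum_(U : {set 'I_n} | U \subset S) (-2) ^+ #|U| * (U \subset A : nat)%:R :> R.
  rewrite (eq_bigr (fun i => 1 + (-2) * (i \in A : nat)%:R)) => [|i _]; last first.
    by case: (i \in A) => /=; ring.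
  rewrite prod1D_subset; apply: eq_bigr => U _; rewrite big_split prodr_const /=.
  case: (boolP (U \subset A)) => [/subsetP UA|/subsetPn [i iU iA]].
    by rewrite big1 // => i /UA ->.
  by rewrite (bigD1 i) //= (negbTE iA) mul0r.
have countE (U : {set 'I_n}) : \sum_(A : {set 'I_n} | #|A| == s) (U \subset A : nat)%:R
    = 'C(n, s)%:R * ((s ^_ #|U|)%:R / (n ^_ #|U|)%:R) :> R.
  have Un : (#|U| <= n)%N by rewrite -[n in (_ <= n)%N]card_ord max_card.
  rewrite sum_indicator_card mulrA -[_ * _%:R]natrM; apply: (canRL (mulfK _)).
    by rewrite pnatr_eq0 -lt0n ffact_gt0.
  have := card_draws_meet_ffact s (subxx U); rewrite card_ord subnn muln1 => <-.
  by rewrite natrM; congr (_%:R * _); apply: eq_card => A; rewrite !inE (sameP eqP setIidPr).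
under eq_bigr do rewrite signE.
rewrite exchange_big /=.
under eq_bigr do rewrite -mulr_sumr countE.
rewrite (sum_subset_card S (fun t => (-2) ^+ t * ('C(n, s)%:R * ((s ^_ t)%:R / (n ^_ t)%:R)))).
by rewrite /lam mulr_sumr; apply: eq_bigr => t _; ring.
Qed.

Section BinomialProduct.
Variable R : realFieldType.

Lemma coef_1DX (a j : nat) : ((1 + 'X) ^+ a : {poly R})`_j = 'C(a, j)%:R.
Proof.
elim: a j => [|a IHa] j; first by rewrite expr0 coefC; case: j.
rewrite exprSr mulrDr mulr1 coefD coefMX IHa.
by case: j => [|j]; rewrite /= ?addr0 ?bin0 // IHa binS natrD addrC.
Qed.

Lemma coef_1DX_1BX (a b j : nat) :
  ((1 + 'X) ^+ a * (1 - 'X) ^+ b : {poly R})`_j = 'C(a + b, j)%:R * acoef R a b j.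
Proof.
elim: b j => [|b IHb] j; first by rewrite mulr1 addn0 coef_1DX mulr1.
rewrite exprSr mulrA mulrBr mulr1 coefB coefMX !IHb /= !addnS.
set N := (a + b).+1; have N0 : N%:R != 0 :> R by rewrite pnatr_eq0.
case: j => [|j] /=; first by rewrite !bin0 !subr0 !mul0r subr0 divff // !mul1r.
have [le_jN|lt_Nj] := leqP j.+1 N; last first.
  by rewrite !bin_small ?mul0r ?subr0 //; apply: leq_trans lt_Nj.
have := congr1 (fun m => m%:R : R) (mul_bin_down N j.+1).
have := congr1 (fun m => m%:R : R) (mul_bin_diag N j).
rewrite /= !natrM natrB // => diagE downE.
apply: (mulfI N0); rewrite mulrBr !mulrA downE diagE; field; exact: N0.
Qed.

End BinomialProduct.

Lemma card_ord_lt n b : (b <= n)%N -> #|[set j : 'I_n | (j < b)%N]| = b.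
Proof.
move=> le_bn; have widen_inj : injective (widen_ord le_bn).
  by move=> i j [/val_inj].
rewrite -[RHS]card_ord -(card_imset _ widen_inj).
apply: eq_card => j; rewrite inE; apply/idP/imsetP => [lt_jb|[i _ ->]] /=.
  by exists (Ordinal lt_jb) => //; apply: val_inj.
exact: ltn_ord.
Qed.

Lemma card_ord_range n a b : (a + b <= n)%N ->
  #|[set j : 'I_n | (a <= j)%N && (j < a + b)%N]| = b.
Proof.
move=> le_abn; have le_an : (a <= n)%N by apply: leq_trans le_abn; apply: leq_addr.
have sub_ab : [set j : 'I_n | (j < a)%N] \subset [set j : 'I_n | (j < a + b)%N].
  by apply/subsetP => j; rewrite !inE => /ltn_addr ->.
have := cardsID [set j : 'I_n | (j < a)%N] [set j : 'I_n | (j < a + b)%N].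
rewrite (setIidPr sub_ab) !card_ord_lt // => /addnI cardD.
by rewrite -[RHS]cardD; apply: eq_card => j; rewrite !inE -leqNgt.
Qed.

Lemma prod_sign_1DCX (R : comNzRingType) n a b : (a + b <= n)%N ->
  \prod_(i in [set j : 'I_n | (j < a + b)%N]) (1 + ((-1) ^+ (a <= i)%N)%:P * 'X)
  = (1 + 'X) ^+ a * (1 - 'X) ^+ b :> {poly R}.
Proof.
move=> le_abn; have le_an : (a <= n)%N by apply: leq_trans le_abn; apply: leq_addr.
rewrite (bigID (fun i : 'I_n => (a <= i)%N)) [RHS]mulrC /=; congr (_ * _).
  rewrite (eq_bigr (fun=> 1 - 'X)) => [|i /andP[_ ->]]; last by rewrite expr1 polyCN mulN1r.
  rewrite prodr_const -[in RHS](card_ord_range le_abn); congr (_ ^+ _).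
  by apply: eq_card => i; rewrite unfold_in !inE andbC.
rewrite (eq_bigr (fun=> 1 + 'X)) => [|i /andP[_ /negbTE ->]]; last by rewrite polyC1 mul1r.
rewrite prodr_const -[in RHS](card_ord_lt le_an); congr (_ ^+ _); apply: eq_card => i.
by rewrite unfold_in !inE; case: (leqP a i) => [_|lt_ia]; rewrite /= ?andbF // andbT ltn_addr.
Qed.

Lemma all_false_sign_sum (R : numFieldType) (T : finType) (P : {set T}) (x : T -> bool) :
  ([forall i, (i \in P) ==> ~~ x i] : nat)%:R
  = (2 ^+ #|P|)^-1 * \sum_(S : {set T} | S \subset P) \prod_(i in S) (-1) ^+ x i :> R.
Proof.
have indicatorE i : (~~ x i : nat)%:R = 2^-1 * (1 + (-1) ^+ x i) :> R.
  by case: (x i); rewrite /= ?subrr ?mulr0 // -[1 + 1]/(2%:R) mulVf ?pnatr_eq0.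
rewrite -prod1D_subset -exprVn -prodr_const -big_split /=.
under eq_bigr do rewrite -indicatorE.
case: (boolP [forall i, _]) => [/forallP allP|/forallPn[i]].
  by rewrite big1 // => i /(implyP (allP i)) /negbTE ->.
by rewrite negb_imply negbK => /andP[iP xi]; rewrite (bigD1 i) //= xi mul0r.
Qed.

Section Outcomes.
Variables (R : realFieldType) (n : nat) (I : finType).
Implicit Types (t : I -> nat) (w : outcome n I).

Lemma card_valid t : #|valid n t| = (\prod_r 'C(n, t r))%N.
Proof.
rewrite (eq_card (B := family (fun r => [pred A : {set 'I_n} | #|A| == t r]))).
  rewrite card_family foldrE big_map big_enum; apply: eq_bigr => r _.
  by rewrite -[n in 'C(n, _)]card_ord -card_draws cardsE.
by move=> w; rewrite inE; apply/forallP/familyP.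
Qed.

Lemma sum_valid_prod t (h : I -> {set 'I_n} -> R) :
  \sum_(w in valid n t) \prod_r h r (w r)
  = \prod_r \sum_(A : {set 'I_n} | #|A| == t r) h r A.
Proof.
by rewrite bigA_distr_big_dep; apply: eq_bigl => w; rewrite inE; apply/forallP/familyP.
Qed.

Lemma probE t (E : pred (outcome n I)) :
  prob R t E = (\sum_(w in valid n t) (E w : nat)%:R) / #|valid n t|%:R.
Proof. by rewrite /prob sum_indicator_card. Qed.

Lemma eq_prob t (E F : pred (outcome n I)) : E =1 F -> prob R t E = prob R t F.
Proof. by move=> EF; rewrite !probE; under eq_bigr do rewrite EF. Qed.

Lemma sign_final (x0 : 'I_n -> bool) w j :
  (-1) ^+ final x0 w j = (-1) ^+ x0 j * \prod_r (-1) ^+ (j \in w r) :> R.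
Proof.
rewrite /final signr_addb signr_odd; congr (_ * _).
rewrite (eq_bigr (fun r => if j \in w r then -1 else 1)) => [|r _]; last by case: (j \in w r).
by rewrite -big_mkcond prodr_const cardsE.
Qed.

End Outcomes.

Section InitialState.
Variables (R : realFieldType) (n : nat) (I : finType) (t : I -> nat).
Hypothesis t_le_n : forall r, (t r <= n)%N.

Lemma card_valid_neq0 : #|valid n t|%:R != 0 :> R.
Proof.
by rewrite card_valid natr_prod; apply/prodf_neq0 => r _; rewrite pnatr_eq0 -lt0n bin_gt0.
Qed.

Lemma sum_valid_sign_final (x0 : 'I_n -> bool) (S : {set 'I_n}) :
  \sum_(w in valid n t) \prod_(i in S) (-1) ^+ final x0 w i
  = (\prod_(i in S) (-1) ^+ x0 i) * (#|valid n t|%:R * lamP R n #|S| t) :> R.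
Proof.
transitivity (\sum_(w in valid n t) (\prod_(i in S) (-1) ^+ x0 i) *
                \prod_r \prod_(i in S) (-1) ^+ (i \in w r) : R).
  apply: eq_bigr => w _; rewrite exchange_big -big_split /=.
  by apply: eq_bigr => i _; exact: sign_final.
rewrite -mulr_sumr (sum_valid_prod t (fun _ A => \prod_(i in S) (-1) ^+ (i \in A) : R)).
rewrite card_valid natr_prod /lamP -big_split /=.
by congr (_ * _); apply: eq_bigr => r _; rewrite sum_draws_sign.
Qed.

Lemma prob_all_off (x0 : 'I_n -> bool) (P : {set 'I_n}) :
  prob R t (fun w => [forall j, (j \in P) ==> ~~ final x0 w j])
  = (2 ^+ #|P|)^-1 *
    \sum_(S : {set 'I_n} | S \subset P) (\prod_(i in S) (-1) ^+ x0 i) * lamP R n #|S| t.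
Proof.
rewrite probE; under eq_bigr do rewrite all_false_sign_sum.
rewrite -mulr_sumr exchange_big -mulrA mulr_suml; congr (_ * _); apply: eq_bigr => S _.
by rewrite sum_valid_sign_final mulrC mulrCA mulKf ?card_valid_neq0.
Qed.

End InitialState.

Lemma f_probE (R : realFieldType) n (I : finType) (t : I -> nat) a b :
  (forall r, t r <= n)%N -> (a + b <= n)%N -> f_prob R n t a b = f_formula R n t a b.
Proof.
move=> t_le_n le_abn; set P := [set j : 'I_n | (j < a + b)%N].
set x0 := fun j : 'I_n => (a <= j)%N && (j < a + b)%N.
rewrite /f_prob (@eq_prob _ _ _ _ _ (fun w => [forall j, (j \in P) ==> ~~ final x0 w j])).
rewrite prob_all_off // (sum_subset_by_card P (fun S => \prod_(i in S) (-1) ^+ x0 i : R)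
  (fun j => lamP R n j t)) card_ord_lt //; congr (_ * _).
apply: eq_bigr => j _; congr (_ * _).
rewrite -coef_prod_1DCX -coef_1DX_1BX -(prod_sign_1DCX _ le_abn).
  rewrite (eq_bigr (fun i : 'I_n => 1 + ((-1) ^+ (a <= i)%N)%:P * 'X)) // => i.
  by rewrite inE /x0 => ->; rewrite andbT.
by move=> w; apply: eq_forallb => j; rewrite inE.
Qed.

Section InsertStage.
Variables (n k : nat) (l : 'I_k).

Definition insert_stage (A : {set 'I_n}) (w : outcome n 'I_k.-1) : outcome n 'I_k :=
  [ffun r => if unlift l r is Some i then w i else A].

Lemma insert_stage_l A w : insert_stage A w l = A.
Proof. by rewrite ffunE unlift_none. Qed.

Lemma insert_stage_lift A w i : insert_stage A w (lift l i) = w i.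
Proof. by rewrite ffunE liftK. Qed.

Lemma card_insert_stage (E : pred (outcome n 'I_k)) :
  #|[set w | E w]|
  = #|[set p : {set 'I_n} * outcome n 'I_k.-1 | E (insert_stage p.1 p.2)]|.
Proof.
have bij : bijective (fun p : {set 'I_n} * outcome n 'I_k.-1 => insert_stage p.1 p.2).
  exists (fun w : outcome n 'I_k => (w l, [ffun i => w (lift l i)] : outcome n 'I_k.-1)).
    move=> [A w] /=; rewrite insert_stage_l; congr (_, _).
    by apply/ffunP => i; rewrite ffunE insert_stage_lift.
  move=> w /=; apply/ffunP => r; rewrite ffunE.
  by case: unliftP => [i ->|->]; rewrite ?ffunE.
rewrite -(on_card_preimset (onW_bij _ bij)); apply: eq_card => p.
by rewrite !inE.
Qed.

Lemma valid_insert_stage (s : 'I_k -> nat) A w :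
  (insert_stage A w \in valid n s) = (#|A| == s l) && (w \in valid n (drop_stage s l)).
Proof.
rewrite !inE; apply/forallP/andP => [valid_Aw|[sA /forallP valid_w] r].
  split; first by have := valid_Aw l; rewrite insert_stage_l.
  by apply/forallP => i; have := valid_Aw (lift l i); rewrite insert_stage_lift.
by case: (unliftP l r) => [i ->|->]; rewrite ?insert_stage_lift ?insert_stage_l.
Qed.

Lemma final_insert_stage (x0 : 'I_n -> bool) A w j :
  final x0 (insert_stage A w) j = x0 j (+) (j \in A) (+) odd #|[set i | j \in w i]|.
Proof.
have cardE (I : finType) (p : pred I) : #|[set r | p r]| = (\sum_r p r)%N.
  by rewrite -sum1_card big_mkcond; apply: eq_bigr => r _; rewrite inE.
rewrite /final cardE (bigD1_ord l) //= oddD insert_stage_l cardE addbA oddb.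
by congr (_ (+) odd _); apply: eq_bigr => i _; rewrite insert_stage_lift.
Qed.

End InsertStage.

Lemma g_event_insert_stage n k (l : 'I_k) A (w : outcome n 'I_k.-1) a b :
  [forall j : 'I_n, (j < a + b)%N ==>
     ~~ final (fun _ => false) (insert_stage l A w) j
     && ((j \in insert_stage l A w l) == (a <= j)%N)]
  = (A :&: [set j : 'I_n | (j < a + b)%N] == [set j : 'I_n | (a <= j)%N && (j < a + b)%N])
    && [forall j : 'I_n, (j < a + b)%N ==>
          ~~ final (fun j : 'I_n => (a <= j)%N && (j < a + b)%N) w j].
Proof.
have splitE (j : 'I_n) : (j < a + b)%N ->
    ~~ final (fun _ => false) (insert_stage l A w) j && ((j \in insert_stage l A w l) == (a <= j)%N)
    = ((j \in A) == (a <= j)%N) && ~~ final (fun j : 'I_n => (a <= j)%N && (j < a + b)%N) w j.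
  move=> lt_jb; rewrite final_insert_stage insert_stage_l /final lt_jb andbT.
  by case: (j \in A); case: (a <= j)%N; case: (odd _).
apply/forallP/andP => [all_j|[/eqP APQ /forallP f_w] j].
  split.
    apply/eqP/setP => j; rewrite !inE; case: (ltnP j (a + b)) => [lt_jb|]; rewrite ?andbF ?andbT //.
    by have := all_j j; rewrite lt_jb splitE // => /andP[/eqP].
  by apply/forallP => j; apply/implyP => lt_jb; have := all_j j; rewrite lt_jb splitE // => /andP[].
apply/implyP => lt_jb; rewrite splitE // (implyP (f_w j)) // andbT.
by move/setP/(_ j): APQ; rewrite !inE lt_jb !andbT => ->.
Qed.

Lemma g_probE (R : realFieldType) n k (s : 'I_k -> nat) (l : 'I_k) a b :
  (forall r, s r <= n)%N -> (a + b <= n)%N ->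
  g_prob R n s l a b = f_prob R n (drop_stage s l) a b * p_coef R n s l a b.
Proof.
move=> s_le_n le_abn; set s' := drop_stage s l.
set P := [set j : 'I_n | (j < a + b)%N].
set Q := [set j : 'I_n | (a <= j)%N && (j < a + b)%N].
set Ef := fun w : outcome n 'I_k.-1 => [forall j : 'I_n, (j < a + b)%N ==>
  ~~ final (fun j : 'I_n => (a <= j)%N && (j < a + b)%N) w j].
set N := #|[set A : {set 'I_n} | (#|A| == s l) && (A :&: P == Q)]|.
have numE : #|[set w in valid n s | [forall j : 'I_n, (j < a + b)%N ==>
    ~~ final (fun _ => false) w j && ((j \in w l) == (a <= j)%N)]]|
    = (N * #|[set w in valid n s' | Ef w]|)%N.
  rewrite (card_insert_stage l) -cardsX; apply: eq_card => -[A w].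
  rewrite in_setX inE [in RHS]inE [w \in _]inE /= valid_insert_stage g_event_insert_stage.
  rewrite -/P -/Q -/(Ef w).
  by case: (#|A| == s l); case: (A :&: P == Q); case: (w \in _); case: (Ef w).
have denE : #|valid n s| = ('C(n, s l) * #|valid n s'|)%N.
  rewrite (eq_card (B := [set w | w \in valid n s])) => [|w]; last by rewrite inE.
  rewrite (card_insert_stage l) -[n in 'C(n, _)]card_ord -card_draws -cardsX.
  by apply: eq_card => -[A w]; rewrite in_setX inE /= valid_insert_stage [A \in _]inE.
have QP : Q \subset P by apply/subsetP => j; rewrite !inE => /andP[].
have := card_draws_meet_ffact (s l) QP.
rewrite card_ord card_ord_lt // card_ord_range // addnK -/N => NE.
have ffact_neq0 m j : (j <= m)%N -> (m ^_ j)%:R != 0 :> R by rewrite pnatr_eq0 -lt0n ffact_gt0.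
have CV0 : ('C(n, s l) * #|valid n s'|)%:R != 0 :> R.
  by rewrite -denE card_valid_neq0.
have NR : N%:R = ('C(n, s l) * s l ^_ b * (n - s l) ^_ a)%:R / (n ^_ (a + b))%:R :> R.
  by rewrite -NE natrM mulfK ?ffact_neq0.
rewrite /g_prob /f_prob /prob numE denE /p_coef natrM NR.
move: CV0; rewrite !natrM mulf_eq0 negb_or => /andP[C0 V0].
by field; rewrite C0 V0 ffact_neq0.
Qed.

Lemma acoef_table (R : realFieldType) : [/\ forall j, (j <= 0)%N -> acoef R 0 0 j = 1,
          forall j, (j <= 1)%N -> acoef R 0 1 j = (-1) ^+ j /\ acoef R 1 0 j = 1,
          forall j, (j <= 2)%N -> [/\ acoef R 0 2 j = (-1) ^+ j,
                                      acoef R 1 1 j = 1 - j%:R & acoef R 2 0 j = 1],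
          forall j, (j <= 3)%N -> [/\ acoef R 0 3 j = (-1) ^+ j,
                                      acoef R 1 2 j = (-1) ^+ j * (1 - 2 * j%:R / 3),
                                      acoef R 2 1 j = 1 - 2 * j%:R / 3
                                    & acoef R 3 0 j = 1]
        & forall j, (j <= 4)%N -> [/\ acoef R 0 4 j = (-1) ^+ j,
                                      acoef R 1 3 j = (-1) ^+ j * (1 - j%:R / 2),
                                      acoef R 2 2 j = 1 - j%:R * (4 - j%:R) / 3,
                                      acoef R 3 1 j = 1 - j%:R / 2
                                    & acoef R 4 0 j = 1]].
Proof.
have n2 : (2%:R : R) != 0 by rewrite pnatr_eq0.
have n3 : (3%:R : R) != 0 by rewrite pnatr_eq0.
have n4 : (4%:R : R) != 0 by rewrite pnatr_eq0.
split => j; (do 5? [case: j => [|j]]) => //= _; rewrite /= ?expr0 ?expr1 ?exprS ?expr0;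
  (repeat split); rewrite ?mulr0 ?mul0r ?subr0 ?sub0r; field; rewrite ?n2 ?n3 ?n4 //.
Qed.

Theorem corollary4p1 (R : realFieldType) (n k : nat) (s : 'I_k -> nat) (l : 'I_k)
  (alpha beta : nat) (hs : forall r, (s r <= n)%N) (hab : (alpha + beta <= n)%N) :
  [/\ g_prob R n s l alpha beta
        = f_prob R n (drop_stage s l) alpha beta * p_coef R n s l alpha beta,
      f_prob R n (drop_stage s l) alpha beta
        = f_formula R n (drop_stage s l) alpha beta &
      [/\ forall j, (j <= 0)%N -> acoef R 0 0 j = 1,
          forall j, (j <= 1)%N -> acoef R 0 1 j = (-1) ^+ j /\ acoef R 1 0 j = 1,
          forall j, (j <= 2)%N -> [/\ acoef R 0 2 j = (-1) ^+ j,
                                      acoef R 1 1 j = 1 - j%:R & acoef R 2 0 j = 1],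
          forall j, (j <= 3)%N -> [/\ acoef R 0 3 j = (-1) ^+ j,
                                      acoef R 1 2 j = (-1) ^+ j * (1 - 2 * j%:R / 3),
                                      acoef R 2 1 j = 1 - 2 * j%:R / 3
                                    & acoef R 3 0 j = 1]
        & forall j, (j <= 4)%N -> [/\ acoef R 0 4 j = (-1) ^+ j,
                                      acoef R 1 3 j = (-1) ^+ j * (1 - j%:R / 2),
                                      acoef R 2 2 j = 1 - j%:R * (4 - j%:R) / 3,
                                      acoef R 3 1 j = 1 - j%:R / 2
                                    & acoef R 4 0 j = 1]]].
Proof.
have hs' r : (drop_stage s l r <= n)%N by exact: hs.
by split; [exact: g_probE | exact: f_probE | exact: acoef_table].
Qed.
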